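(* Let $q$ be a prime power, $\mathbb{F}_q$ the finite field with $q$ elements, and $n\ge 1$. Let $C\subseteq \mathbb{F}_q^n$ be a linear code (a subspace) such that, for some real numbers $a_n\ge 1$ and $T$, \[ \frac{M_Q(C\setminus\{0_n\})}{|\mathcal{T}_Q^n|}\le a_n q^{-nT}\qquad\text{for all } Q\in\mathcal{P}_n(\mathbb{F}_q). \] Let $J\subseteq\mathbb{F}_q^n$ be a set of coset representatives for $\mathbb{F}_q^n/C$ (one representative per coset) such that the representative in $J$ of each coset $D$ attains the minimum of $H(\mathsf{P}_x)$ over $x\in D$. Then for every probability distribution $P_n$ on $\mathbb{F}_q^n$, \[ \mathbb{E}_{\boldsymbol{\pi}}\, P_n\big(\boldsymbol{\pi}(J)^{\mathrm c}\big)\le a_n\,|\mathcal{P}_n(\mathbb{F}_q)|\sum_{Q\in\mathcal{P}_n(\mathbb{F}_q)} P_n(\mathcal{T}_Q^n)\, q^{-n\,|T-H(Q)|^+}, \] where $\boldsymbol{\pi}$ is uniformly distributed over the symmetric group $\mathcal{S}_n$, $\mathrm{c}$ denotes complement in $\mathbb{F}_q^n$, and $|t|^+=\max\{t,0\}$.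
   Context: For $x\in\mathbb{F}_q^n$, the type $\mathsf{P}_x$ is the probability distribution on $\mathbb{F}_q$ with $n\mathsf{P}_x(u)$ equal to the number of coordinates of $x$ equal to $u$. $\mathcal{P}_n(\mathbb{F}_q)$ is the set of all types of sequences in $\mathbb{F}_q^n$. For a type $Q$, $\mathcal{T}_Q^n=\{y\in\mathbb{F}_q^n:\mathsf{P}_y=Q\}$, and for a set $B\subseteq\mathbb{F}_q^n$, $M_Q(B)=|\{y\in B:\mathsf{P}_y=Q\}|$. $H(Q)=-\sum_u Q(u)\log_q Q(u)$ (logarithms to base $q$). $0_n$ is the zero vector. The symmetric group $\mathcal{S}_n$ acts on $\mathbb{F}_q^n$ by $\pi((x_1,\dots,x_n))=(x_{\pi(1)},\dots,x_{\pi(n)})$, and $\pi(J)=\{\pi(x):x\in J\}$. *)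

From HB Require Import structures.
From mathcomp Require Import all_boot all_order all_algebra all_fingroup all_field.
From mathcomp Require Import all_classical all_reals all_analysis.
Set Implicit Arguments. Unset Strict Implicit. Unset Printing Implicit Defensive.
Import Order.TTheory GRing.Theory Num.Theory.
Local Open Scope ring_scope.

Section TypesDefs.
Variables (F : finFieldType) (n : nat).

(* A type is represented by its count function u |-> n * P(u) = #{i : x_i = u}. *)
Definition ptype (x : 'rV[F]_n) : {ffun F -> 'I_n.+1} :=
  [ffun u => inord #|[set i : 'I_n | x ord0 i == u]| ].

Definition types : {set {ffun F -> 'I_n.+1}} := [set ptype x | x : 'rV[F]_n].

Definition typeclass (Q : {ffun F -> 'I_n.+1}) : {set 'rV[F]_n} :=
  [set y | ptype y == Q].

Definition MQ (Q : {ffun F -> 'I_n.+1}) (B : {set 'rV[F]_n}) : nat :=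
  #|[set y in B | ptype y == Q]|.

Definition pact (s : 'S_n) (x : 'rV[F]_n) : 'rV[F]_n := \row_i x ord0 (s i).

Definition pimage (s : 'S_n) (J : {set 'rV[F]_n}) : {set 'rV[F]_n} :=
  [set pact s x | x in J].

Variable R : realType.

Definition tdist (Q : {ffun F -> 'I_n.+1}) (u : F) : R :=
  (nat_of_ord (Q u))%:R / n%:R.

Definition entropy (Q : {ffun F -> 'I_n.+1}) : R :=
  - \sum_(u : F) tdist Q u * (ln (tdist Q u) / ln (#|F|%:R)).

Definition Pr (P : {ffun 'rV[F]_n -> R}) (A : {set 'rV[F]_n}) : R :=
  \sum_(x in A) P x.

End TypesDefs.

(* If x is missed by π(J), then y = π⁻¹x is not a coset leader, so its leader is y - c for a
   nonzero codeword c, and H(y - c) <= H(y) = H(x).  Hence the number of π missing x is at most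
   Σ_{c ∈ C\0} #{π : πx - c ∈ A}, where A is the set of sequences of entropy at most H(x).  This
   count depends on c only through its type, so the type-spectrum bound on C compares the sum
   with a_n q^{-nT} times the same sum over all c ∈ F_q^n, which is n! |A| <= n! |P_n| q^{nH(x)}.
   Together with the trivial bound n! and an average over x ~ P_n this is the claim. *)

From HB Require Import structures.
From mathcomp Require Import all_boot all_order all_algebra all_fingroup all_field.
From mathcomp Require Import all_classical all_reals all_analysis.
From mathcomp Require Import ring.
Set Implicit Arguments. Unset Strict Implicit. Unset Printing Implicit Defensive.
Import Order.TTheory GRing.Theory Num.Theory.
Local Open Scope ring_scope.

Section PermutationAction.
Variables (F : finFieldType) (n : nat).
Local Notation V := 'rV[F]_n.

Lemma pactM (s t : 'S_n) (x : V) : pact s (pact t x) = pact (s * t) x.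
Proof. by apply/rowP => i; rewrite !mxE permM. Qed.

Lemma pact1 (x : V) : pact 1 x = x.
Proof. by apply/rowP => i; rewrite !mxE perm1. Qed.

Lemma pactB (s : 'S_n) (x y : V) : pact s (x - y) = pact s x - pact s y.
Proof. by apply/rowP => i; rewrite !mxE. Qed.

Lemma card_ptype (x : V) (u : F) :
  #|[set i : 'I_n | x ord0 i == u]| = ptype x u :> nat.
Proof.
rewrite ffunE inordK // ltnS.
by apply: leq_trans (max_card _) _; rewrite card_ord.
Qed.

Lemma sum_ptype (x : V) : (\sum_(u : F) ptype x u)%N = n.
Proof.
under eq_bigr do rewrite -card_ptype.
rewrite -[RHS]card_ord -sum1_card (partition_big (fun i => x ord0 i) xpredT) //=.
by apply: eq_bigr => u _; rewrite -sum1_card; apply: eq_bigl => i; rewrite inE.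
Qed.

Lemma ptype_pact (s : 'S_n) (x : V) : ptype (pact s x) = ptype x.
Proof.
apply/ffunP => u; rewrite !ffunE; congr inord.
rewrite -(card_preimset [set i | x ord0 i == u] (@perm_inj _ s)).
by apply: eq_card => i; rewrite !inE mxE.
Qed.

(* The permutation matches, for each letter u, the positions where c' equals u
   with those where c does, in increasing order. *)
Lemma ptype_eq_pact (c c' : V) : ptype c = ptype c' -> exists t : 'S_n, c' = pact t c.
Proof.
move=> eq_cc'.
pose S (y : V) u := enum [set j : 'I_n | y ord0 j == u].
pose f i := nth i (S c (c' ord0 i)) (index i (S c' (c' ord0 i))).
have mem_S i : i \in S c' (c' ord0 i) by rewrite mem_enum inE.
have index_lt i : (index i (S c' (c' ord0 i)) < size (S c (c' ord0 i)))%N.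
  by rewrite /S -cardE card_ptype eq_cc' -card_ptype cardE index_mem.
have f_val i : c ord0 (f i) = c' ord0 i.
  by have := mem_nth i (index_lt i); rewrite mem_enum inE => /eqP.
have f_inj : injective f.
  move=> i j fij; have eq_ij : c' ord0 i = c' ord0 j by rewrite -!f_val fij.
  move: fij (index_lt j); rewrite /f -eq_ij => fij ltj.
  rewrite (set_nth_default j) // in fij.
  move/eqP: fij; rewrite nth_uniq ?enum_uniq ?index_lt // => /eqP eq_idx.
  by rewrite -(nth_index i (mem_S i)) eq_idx eq_ij nth_index.
by exists (perm f_inj); apply/rowP => i; rewrite mxE permE f_val.
Qed.

End PermutationAction.

Section TypeClasses.
Variables (R : realType) (F : finFieldType) (n : nat).
Local Notation V := 'rV[F]_n.
Local Notation q := (#|F|%:R : R).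

Lemma q_gt1 : 1 < q.
Proof. by rewrite ltr1n card_finNzRing_gt1. Qed.

Lemma q_gt0 : 0 < q.
Proof. exact: lt_trans ltr01 q_gt1. Qed.

Lemma powqD (x y : R) : q `^ (x + y) = q `^ x * q `^ y.
Proof. by rewrite powRD // (gt_eqF q_gt0) implybT. Qed.

Lemma sum_row_prod (p : F -> R) :
  \sum_(w : V) \prod_(i < n) p (w ord0 i) = (\sum_(u : F) p u) ^+ n.
Proof.
rewrite -[n in RHS]card_ord -prodr_const bigA_distr_bigA.
rewrite (reindex (fun w : V => [ffun i => w ord0 i])) /=.
  by apply: eq_bigr => w _; apply: eq_bigr => i _; rewrite ffunE.
apply: onW_bij; exists (fun f : {ffun 'I_n -> F} => \row_i f i).
  by move=> w; apply/rowP => i; rewrite !mxE ffunE.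
by move=> f; apply/ffunP => i; rewrite !ffunE mxE.
Qed.

Lemma prod_ptype (p : F -> R) (w : V) :
  \prod_(i < n) p (w ord0 i) = \prod_(u : F) p u ^+ ptype w u.
Proof.
rewrite (partition_big (fun i => w ord0 i) xpredT) //=.
apply: eq_bigr => u _; rewrite -card_ptype -prodr_const.
by apply: eq_big => [i | i /eqP ->]; rewrite ?inE.
Qed.

Hypothesis n_gt0 : (0 < n)%N.

Lemma sum_tdist (x : V) : \sum_(u : F) tdist R (ptype x) u = 1.
Proof.
by rewrite /tdist -mulr_suml -natr_sum sum_ptype divff // pnatr_eq0 -lt0n.
Qed.

(* [q ^ (- n H(Q))] is the probability of each sequence of type [Q] under the i.i.d. law [Q]. *)
Lemma powq_entropy (Q : {ffun F -> 'I_n.+1}) :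
  q `^ (- (n%:R * entropy R Q)) = \prod_(u : F) tdist R Q u ^+ Q u.
Proof.
have lnq_neq0 : ln q != 0 by rewrite gt_eqF // ln_gt0 // q_gt1.
have n_neq0 : (n%:R : R) != 0 by rewrite pnatr_eq0 -lt0n.
rewrite /powR gt_eqF ?q_gt0 //.
rewrite /entropy mulrN opprK mulr_sumr mulr_suml expR_sum; apply: eq_bigr => u _.
have -> : n%:R * (tdist R Q u * (ln (tdist R Q u) / ln q)) * ln q =
          (Q u)%:R * ln (tdist R Q u) by rewrite /tdist; field; apply/andP.
have [-> | Qu_gt0] := posnP (Q u); first by rewrite mul0r expR0 expr0.
have tdist_gt0 : 0 < tdist R Q u by rewrite /tdist divr_gt0 // ltr0n.
by rewrite mulr_natl -lnXn // lnK // posrE exprn_gt0.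
Qed.

Lemma card_typeclass_le (Q : {ffun F -> 'I_n.+1}) : Q \in types F n ->
  #|typeclass Q|%:R <= q `^ (n%:R * entropy R Q).
Proof.
case/imsetP => x _ ->; set p := tdist R (ptype x).
have sum_p : \sum_(w : V) \prod_(i < n) p (w ord0 i) = 1.
  by rewrite sum_row_prod sum_tdist expr1n.
rewrite -[X in _ <= X]mul1r -ler_pdivrMr ?powR_gt0 ?q_gt0 // -powRN.
rewrite -[X in _ <= X]sum_p (bigID (mem (typeclass (ptype x)))) /=.
rewrite -[X in X <= _]addr0; apply: lerD.
  rewrite (eq_bigr (fun=> q `^ (- (n%:R * entropy R (ptype x))))) => [|w].
    by rewrite sumr_const -[_ *+ #|_|]mulr_natl.
  by rewrite inE => /eqP eq_w; rewrite prod_ptype powq_entropy eq_w.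
by apply: sumr_ge0 => w _; apply: prodr_ge0 => i _; rewrite divr_ge0.
Qed.

Definition low_entropy (H : R) : {set V} := [set w | entropy R (ptype w) <= H].

Lemma card_low_entropy (H : R) :
  #|low_entropy H|%:R <= #|types F n|%:R * q `^ (n%:R * H).
Proof.
have -> : #|low_entropy H| =
    (\sum_(Q in types F n) #|[set w in low_entropy H | ptype w == Q]|)%N.
  rewrite -sum1_card (partition_big (@ptype F n) (mem (types F n))) => [|w _]; last first.
    exact: imset_f.
  by apply: eq_bigr => Q _; rewrite sum1dep_card.
rewrite natr_sum -sum1_card natr_sum mulr_suml; apply: ler_sum => Q Q_type; rewrite mul1r.
have [le_HQ | lt_HQ] := leP (entropy R Q) H; last first.
  suff -> : [set w in low_entropy H | ptype w == Q] = finset.set0 by rewrite cards0 powR_ge0.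
  apply/setP => w; rewrite !inE; apply/negbTE/andP => -[low_w /eqP eqQ].
  by move: lt_HQ; rewrite -eqQ ltNge low_w.
apply: (@le_trans _ _ #|typeclass Q|%:R).
  by rewrite ler_nat subset_leq_card //; apply/fintype.subsetP => w; rewrite !inE => /andP[].
apply: le_trans (card_typeclass_le Q_type) _.
by apply: ler_powR; [apply/ltW/q_gt1 | rewrite ler_wpM2l].
Qed.

End TypeClasses.

Arguments low_entropy R {F n} H.

Section PermutationCounts.
Variables (R : realType) (F : finFieldType) (n : nat).
Local Notation V := 'rV[F]_n.

Definition perm_hits (A : {set V}) (x c : V) : R :=
  \sum_(s : 'S_n) ((pact s x - c \in A)%:R).

Lemma sum_perm_hits (A : {set V}) (x : V) :
  \sum_(c : V) perm_hits A x c = n`!%:R * #|A|%:R.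
Proof.
rewrite exchange_big /= (eq_bigr (fun=> #|A|%:R)) => [|s _].
  by rewrite sumr_const card_Sn mulr_natl.
rewrite (reindex_inj (subrI (pact s x))) /= -sum1_card natr_sum [RHS]big_mkcond /=.
by apply: eq_bigr => c _; rewrite subKr; case: (c \in A).
Qed.

Lemma perm_hits_ptype (A : {set V}) (x c c' : V) :
  (forall s w, (pact s w \in A) = (w \in A)) ->
  ptype c = ptype c' -> perm_hits A x c = perm_hits A x c'.
Proof.
move=> A_inv /ptype_eq_pact [t ->].
rewrite /perm_hits [RHS](reindex_inj (mulgI t)) /=; apply: eq_bigr => s _.
by rewrite -pactM -pactB A_inv.
Qed.

Lemma sum_type_invariant_le (B : {set V}) (b : R) (g : V -> R) :
  (forall Q, Q \in types F n -> (MQ Q B)%:R / #|typeclass Q|%:R <= b) ->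
  (forall c, 0 <= g c) -> (forall c c', ptype c = ptype c' -> g c = g c') ->
  \sum_(c in B) g c <= b * \sum_(c : V) g c.
Proof.
move=> B_spectrum g_ge0 g_ptype.
rewrite (partition_big (@ptype F n) xpredT) //= [X in _ * X](partition_big (@ptype F n) xpredT) //=.
rewrite mulr_sumr; apply: ler_sum => Q _.
have [c0 /eqP c0Q | no_Q] := pickP (fun c : V => ptype c == Q); last first.
  by rewrite !big_pred0 ?mulr0 // => c; rewrite no_Q ?andbF.
have Q_type : Q \in types F n by rewrite -c0Q imset_f.
rewrite (eq_bigr (fun=> g c0)) => [|c /andP[_ /eqP]]; last by rewrite -c0Q => /g_ptype.
rewrite [X in _ * X](eq_bigr (fun=> g c0)) => [|c /eqP]; last by rewrite -c0Q => /g_ptype.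
rewrite !sumr_const -![g c0 *+ _]mulr_natl mulrA ler_wpM2r //.
have typeclass_gt0 : (0 < #|typeclass Q|)%N by apply/card_gt0P; exists c0; rewrite inE c0Q.
move: (B_spectrum Q Q_type) typeclass_gt0; rewrite /MQ /typeclass !cardsE => B_Q T_Q_gt0.
by rewrite -ler_pdivrMr ?ltr0n.
Qed.

End PermutationCounts.

Section CosetLeaders.
Variables (R : realType) (F : finFieldType) (n : nat) (C : {vspace 'rV[F]_n}) (J : {set 'rV[F]_n}).
Local Notation V := 'rV[F]_n.
Local Notation q := (#|F|%:R : R).
Local Notation code0 := ([set c : V | c \in C] :\ 0).
Hypothesis J_coset_rep : forall x : V, exists! j, j \in J /\ x - j \in C.
Hypothesis J_min_entropy : forall j x : V, j \in J -> x - j \in C ->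
  entropy R (ptype j) <= entropy R (ptype x).

Lemma notin_pimage_le_sum_code (s : 'S_n) (x : V) :
  ((x \notin pimage s J)%:R : R) <=
  \sum_(c in code0) ((pact s^-1 x - c \in low_entropy R (entropy R (ptype x)))%:R).
Proof.
have sum_ge0 (P : pred V) (f : V -> bool) : 0 <= \sum_(c | P c) ((f c)%:R : R).
  by apply: sumr_ge0 => c _; rewrite ler0n.
have [x_in | x_notin] := boolP (x \in pimage s J); first exact: sum_ge0.
set y := pact s^-1 x.
have y_notin : y \notin J.
  apply: contra x_notin => y_in.
  by rewrite -[x]pact1 -(mulgV s) -pactM imset_f.
have [j [[j_in yj_in] _]] := J_coset_rep y.
have yj_code : y - j \in code0.
  by rewrite !inE yj_in andbT subr_eq0; apply: contraNneq y_notin => ->.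
rewrite (bigD1 (y - j)) //= subKr inE -(ptype_pact s^-1 x) -/y.
by rewrite (J_min_entropy j_in yj_in) lerDl sum_ge0.
Qed.

Lemma sum_notin_pimage_le_hits (x : V) :
  \sum_(s : 'S_n) ((x \notin pimage s J)%:R : R) <=
  \sum_(c in code0) perm_hits R (low_entropy R (entropy R (ptype x))) x c.
Proof.
apply: le_trans (ler_sum _ (fun s _ => notin_pimage_le_sum_code s x)) _.
rewrite exchange_big /=; apply: ler_sum => c _.
by rewrite /perm_hits [X in _ <= X](reindex_inj invg_inj).
Qed.

Variables (a T : R).
Hypothesis code_spectrum : forall Q, Q \in types F n ->
  (MQ Q code0)%:R / (#|typeclass Q|)%:R <= a * q `^ (- (n%:R * T)).

Lemma sum_notin_pimage_le_low_entropy (x : V) :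
  \sum_(s : 'S_n) ((x \notin pimage s J)%:R : R) <=
  a * q `^ (- (n%:R * T)) * (n`!%:R * #|@low_entropy R F n (entropy R (ptype x))|%:R).
Proof.
rewrite -(sum_perm_hits R _ x); apply: le_trans (sum_notin_pimage_le_hits x) _.
apply: sum_type_invariant_le => // [c | c c']; first by apply: sumr_ge0 => s _; rewrite ler0n.
by apply: perm_hits_ptype => s w; rewrite !inE ptype_pact.
Qed.

Hypotheses (n_gt0 : (0 < n)%N) (a_ge1 : 1 <= a).

Lemma sum_notin_pimage_le (x : V) :
  \sum_(s : 'S_n) ((x \notin pimage s J)%:R : R) <=
  n`!%:R * (a * #|types F n|%:R * q `^ (- (n%:R * Num.max (T - entropy R (ptype x)) 0))).
Proof.
set H := entropy R (ptype x).
have a_ge0 : 0 <= a by apply: le_trans a_ge1.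
have [T_le_H | H_lt_T] := leP (T - H) 0.
  rewrite mulr0 oppr0 powRr0 mulr1.
  apply: (@le_trans _ _ n`!%:R).
    by rewrite -card_Sn -sum1_card natr_sum ler_sum // => s _; case: (_ \notin _).
  rewrite ler_pMr ?ltr0n ?fact_gt0 // -[X in X <= _]mulr1 ler_pM //.
  by rewrite ler1n; apply/card_gt0P; exists (ptype x); apply: imset_f.
apply: le_trans (sum_notin_pimage_le_low_entropy x) _.
have -> : - (n%:R * (T - H)) = - (n%:R * T) + n%:R * H by rewrite mulrBr opprB addrC.
rewrite powqD mulrCA ler_wpM2l ?ler0n //.
set aq := a * _; have -> : a * #|types F n|%:R * (q `^ (- (n%:R * T)) * q `^ (n%:R * H)) =
    aq * (#|types F n|%:R * q `^ (n%:R * H)) by rewrite /aq; ring.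
by rewrite ler_wpM2l ?card_low_entropy // mulr_ge0 ?powR_ge0.
Qed.

End CosetLeaders.

Section Averaging.
Variables (R : realType) (F : finFieldType) (n : nat) (P : {ffun 'rV[F]_n -> R}).
Local Notation V := 'rV[F]_n.

Lemma Pr_indicator (A : {set V}) : Pr P A = \sum_(x : V) P x * (x \in A)%:R.
Proof. by rewrite /Pr big_mkcond; apply: eq_bigr => x _; case: (x \in A); rewrite ?mulr1 ?mulr0. Qed.

Lemma sum_by_ptype (f : {ffun F -> 'I_n.+1} -> R) :
  \sum_(x : V) P x * f (ptype x) = \sum_(Q in types F n) Pr P (typeclass Q) * f Q.
Proof.
rewrite (partition_big (@ptype F n) (mem (types F n))) => [|x _]; last exact: imset_f.
apply: eq_bigr => Q _; rewrite /Pr mulr_suml.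
by apply: eq_big => [x | x /eqP ->]; rewrite ?inE.
Qed.

End Averaging.

Theorem lemma4 (R : realType) (F : finFieldType) (n : nat) (Hn : (1 <= n)%N)
  (C : {vspace 'rV[F]_n}) (a_n T : R) (Ha : 1 <= a_n)
  (HC : forall Q, Q \in types F n ->
     (MQ Q ([set x : 'rV[F]_n | x \in C] :\ 0))%:R / (#|typeclass Q|)%:R
       <= a_n * (#|F|%:R) `^ (- (n%:R * T)))
  (J : {set 'rV[F]_n})
  (HJrep : forall x : 'rV[F]_n, exists! j, j \in J /\ x - j \in C)
  (HJmin : forall j x : 'rV[F]_n, j \in J -> x - j \in C ->
     entropy R (ptype j) <= entropy R (ptype x))
  (P : {ffun 'rV[F]_n -> R})
  (HP0 : forall x, 0 <= P x) (HP1 : \sum_x P x = 1) :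
  (n`!%:R)^-1 * \sum_(s : 'S_n) Pr P (~: pimage s J)
    <= a_n * (#|types F n|)%:R *
       \sum_(Q in types F n)
          Pr P (typeclass Q) * (#|F|%:R) `^ (- (n%:R * Num.max (T - entropy R Q) 0)).
Proof.
set K := a_n * #|types F n|%:R.
pose w (Q : {ffun F -> 'I_n.+1}) := (#|F|%:R : R) `^ (- (n%:R * Num.max (T - entropy R Q) 0)).
have avg_notin_pimage_le x :
    (n`!%:R)^-1 * \sum_(s : 'S_n) ((x \in ~: pimage s J)%:R : R) <= K * w (ptype x).
  under eq_bigr do rewrite finset.in_setC.
  by rewrite ler_pdivrMl ?ltr0n ?fact_gt0 //; exact: (sum_notin_pimage_le HJrep HJmin HC Hn Ha).
under eq_bigr do rewrite Pr_indicator.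
rewrite exchange_big /= -(sum_by_ptype P w) !mulr_sumr.
apply: ler_sum => x _; rewrite -mulr_sumr mulrCA [X in _ <= X]mulrCA.
exact: ler_wpM2l.
Qed.
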